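(* Let $v,w$ be positive integers, $\theta\in[0,1]$, and let $K_{v,w}$ be the complete bipartite graph with parts $V$, $W$, $|V|=v$, $|W|=w$. Let $X$ be the capture time (the number of the move at which capture occurs) in the tipsy cop and drunken robber game on $K_{v,w}$, and let $\mathbb{E}^i[X]$ be its expectation when the game starts in Position $i$ (whenever that position exists). Then \begin{align*} \mathbb{E}^1[X]&=\frac{4vw-3w-v+1}{v+w-1}, & \mathbb{E}^2[X]&=\frac{2\,(vw+\theta v(w-1))}{vw-\theta^2(v-1)(w-1)},\\ \mathbb{E}^3[X]&=\frac{4vw-3v-w+1}{v+w-1}, & \mathbb{E}^4[X]&=\frac{2\,(vw+\theta w(v-1))}{vw-\theta^2(v-1)(w-1)}. \end{align*}
   Context: Tipsy cop and drunken robber game on a finite connected graph $G$: a cop and a robber are placed at distinct vertices. Moves are numbered $1,2,3,\dots$; the robber makes the odd-numbered moves and the cop the even-numbered moves, and on each move the mover must move to a vertex adjacent to its current vertex (staying put is not allowed). The robber always moves to a neighbor chosen uniformly at random. The cop, independently at each of her moves, with probability $\theta$ moves to a neighbor chosen uniformly at random, and with probability $1-\theta$ makes a directed move to a neighbor lying on a shortest path to the robber's current vertex (in particular onto the robber's vertex if it is adjacent). All random choices are independent. The robber is captured (and the game ends) as soon as both occupy the same vertex. Starting positions on $K_{v,w}$: Position 1: the cop is at a vertex of $V$ and the robber at a vertex of $W$; Position 2: cop and robber are at two distinct vertices of $V$; Position 3: the robber is at a vertex of $V$ and the cop at a vertex of $W$; Position 4: cop and robber are at two distinct vertices of $W$.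 *)

From HB Require Import structures.
From mathcomp Require Import all_boot all_order all_algebra.
From mathcomp Require Import all_classical all_reals all_analysis.
Set Implicit Arguments. Unset Strict Implicit. Unset Printing Implicit Defensive.
Import Order.TTheory GRing.Theory Num.Theory.
Import numFieldNormedType.Exports.
Local Open Scope classical_set_scope.
Local Open Scope ring_scope.

Section Game.
Variables (R : realType) (T : finType) (e : rel T).

Definition nbr (x : T) : {set T} := [set y | e x y].
Definition deg (x : T) : nat := #|nbr x|.

Fixpoint ball (n : nat) (x : T) : {set T} :=
  match n with
  | 0 => [set x]
  | n'.+1 => ball n' x :|: \bigcup_(y in ball n' x) nbr y
  end.

(* graph distance (correct on connected graphs, where it is < #|T|) *)
Definition gdist (x y : T) : nat := find (fun n => y \in ball n x) (iota 0 #|T|).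

Definition sp_nbr (c r : T) : {set T} :=
  [set y in nbr c | (gdist y r).+1 == gdist c r].

Definition robber_tr (c r c' r' : T) : R :=
  if (c' == c) && e r r' then (deg r)%:R^-1 else 0.

Definition cop_tr (theta : R) (c r c' r' : T) : R :=
  if r' == r then
    theta * (if e c c' then (deg c)%:R^-1 else 0)
    + (1 - theta) * (if c' \in sp_nbr c r then (#|sp_nbr c r|%:R)^-1 else 0)
  else 0.

(* transition from time n to time n+1 (i.e. move number n+1):
   odd moves (n even) are robber moves, even moves (n odd) are cop moves *)
Definition tr (theta : R) (n : nat) : T -> T -> T -> T -> R :=
  if odd n then cop_tr theta else robber_tr.

(* alive theta c0 r0 n c r = probability that after n moves the game is not
   over and the cop is at c and the robber at r *)
Fixpoint alive (theta : R) (c0 r0 : T) (n : nat) : T -> T -> R :=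
  match n with
  | 0 => fun c r => if (c == c0) && (r == r0) then 1 else 0
  | n'.+1 => fun c' r' =>
      if c' == r' then 0
      else \sum_(c : T) \sum_(r : T) alive theta c0 r0 n' c r * tr theta n' c r c' r'
  end.

(* probability that the capture time X equals n+1 *)
Definition capt (theta : R) (c0 r0 : T) (n : nat) : R :=
  \sum_(c : T) \sum_(r : T)
     alive theta c0 r0 n c r * \sum_(x : T) tr theta n c r x x.

(* capture happens almost surely and E[X] = sum_n n P(X = n) equals l *)
Definition expected_capture_time (theta : R) (c0 r0 : T) (l : R) : Prop :=
  (fun N : nat => \sum_(n < N) capt theta c0 r0 n) @ \oo --> (1 : R) /\
  (fun N : nat => \sum_(n < N) (n.+1)%:R * capt theta c0 r0 n) @ \oo --> l.

End Game.

(* complete bipartite graph K_{v,w}: V = inl 'I_v, W = inr 'I_w *)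
Definition Kbip (v w : nat) : rel ('I_v + 'I_w)%type :=
  fun x y => match x, y with
             | inl _, inr _ | inr _, inl _ => true
             | _, _ => false
             end.
Arguments Kbip : clear implicits.

From Pilot Require Import Defs.
From mathcomp Require Import all_boot all_order all_algebra.
From mathcomp Require Import all_classical all_reals all_analysis.
From mathcomp Require Import ring lra zify.
Set Implicit Arguments. Unset Strict Implicit. Unset Printing Implicit Defensive.
Import Order.TTheory GRing.Theory Num.Theory.
Import numFieldNormedType.Exports.
Local Open Scope ring_scope.

(* In K_{v,w} every move switches the side of the mover, so the pair (side of
   the cop, side of the robber) evolves deterministically with period 4, and
   the probability that move n+1 captures, given that the game is still on, is
   a number q_n depending only on this pair and on the parity of n.  The
   survival probabilities are therefore the products of the 4-periodic factors
   1 - q_k, the capture time is a first-success time with periodic hazards, and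
   its mean is V_0 for the 4-periodic solution of the first-step equations
   V_n = 1 + (1 - q_n) V_{n+1}.  Solving these four linear equations gives the
   formulas. *)

Section PeriodicDecay.
Variable R : realType.
Local Open Scope classical_set_scope.

Lemma bernoulli_ineq (x : R) n : -1 <= x -> 1 + n%:R * x <= (1 + x) ^+ n.
Proof.
move=> x_ge; elim: n => [|n IH]; first by rewrite mul0r addr0 expr0.
have n_ge0 : 0 <= n%:R :> R by [].
have x1_ge0 : 0 <= 1 + x by lra.
have := ler_wpM2r x1_ge0 IH.
by rewrite -exprSr -natr1; nra.
Qed.

Lemma cvg0_norm_le (f g : nat -> R) :
  (forall n, `|f n| <= g n) -> g @ \oo --> 0 -> f @ \oo --> 0.
Proof.
move=> fg g0; apply: (squeeze_cvgr (f := fun n => - g n) (h := g)) => //.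
  by apply: nearW => n; rewrite -ler_norml.
by rewrite -oppr0; apply: cvgN.
Qed.

Lemma cvg_nat_mul_expr (s : R) : 0 <= s < 1 ->
  (fun n => n%:R * s ^+ n) @ \oo --> 0.
Proof.
case/andP=> s0 s1; set r := (1 + s) / 2.
have r0 : 0 <= r by rewrite /r; lra.
have r1 : r < 1 by rewrite /r; lra.
have sr : s <= r ^+ 2 by rewrite /r; nra.
(* [n r^n (1 - r) + r^n] is nonincreasing in [n] *)
have nr_le : forall n, n%:R * r ^+ n * (1 - r) + r ^+ n <= 1.
  elim=> [|n IH]; first by rewrite mul0r mul0r add0r expr0.
  apply: le_trans IH; rewrite exprS -natr1.
  have rn0 : 0 <= r ^+ n by rewrite exprn_ge0.
  have n0 : 0 <= n%:R :> R by [].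
  have : 0 <= r ^+ n * ((1 - r) ^+ 2 * (n%:R + 1)).
    by rewrite mulr_ge0 // mulr_ge0 ?sqr_ge0 ?addr_ge0.
  nra.
apply: (@cvg0_norm_le _ (fun n => (1 - r)^-1 * r ^+ n)); last first.
  by rewrite -(mulr0 (1 - r)^-1); apply: cvgMl_tmp; apply: cvg_expr; rewrite ger0_norm.
move=> n; have rn0 : 0 <= r ^+ n by rewrite exprn_ge0 //; lra.
rewrite normrM normr_nat ger0_norm ?exprn_ge0 //.
have sn : s ^+ n <= r ^+ n * r ^+ n.
  rewrite -expr2 -exprM mulnC exprM lerXn2r ?nnegrE ?exprn_ge0 //; lra.
have nrn : n%:R * r ^+ n <= (1 - r)^-1.
  by rewrite -(mul1r (1 - r)^-1) ler_pdivlMr ?subr_gt0 //; have := nr_le n; nra.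
apply: (le_trans (ler_wpM2l (ler0n _ n) sn)); rewrite mulrA.
exact: ler_wpM2r.
Qed.

Lemma periodic_geometric_bound (u : nat -> R) (p : nat) (P s : R) :
  (0 < p)%N -> 0 < s <= 1 -> 0 <= P <= s ^+ p ->
  (forall n, u (n + p)%N = P * u n) ->
  forall n, `|u n| <= (\sum_(k < p) `|u k|) / s ^+ p * s ^+ n.
Proof.
move=> p_gt0 /andP[s_gt0 s_le1] /andP[P_ge0 P_le] uP.
have sp_gt0 : 0 < s ^+ p by rewrite exprn_gt0.
set C := _ / _; have C_ge0 : 0 <= C by rewrite divr_ge0 ?sumr_ge0 ?ltW.
elim/ltn_ind=> n IH; case: (ltnP n p) => [n_lt_p | p_le_n].
- have un_le : `|u n| <= \sum_(k < p) `|u k|.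
    by rewrite (bigD1 (Ordinal n_lt_p)) //= lerDl sumr_ge0.
  apply: le_trans un_le _; rewrite -mulrA ler_peMr ?sumr_ge0 //.
  rewrite mulrC ler_pdivlMr // mul1r.
  exact: ler_wiXn2l (ltW s_gt0) s_le1 _ _ (ltnW n_lt_p).
- rewrite -(subnK p_le_n) uP normrM ger0_norm // exprD mulrA.
  have /(ler_wpM2l P_ge0) le1 : `|u (n - p)%N| <= C * s ^+ (n - p) by apply: IH; lia.
  apply: le_trans le1 _; rewrite [leRHS]mulrC.
  exact: ler_wpM2r (mulr_ge0 C_ge0 (exprn_ge0 _ (ltW s_gt0))) _ _ P_le.
Qed.

Lemma cvg_periodic_decay (u : nat -> R) (p : nat) (P : R) :
  (0 < p)%N -> 0 <= P < 1 -> (forall n, u (n + p)%N = P * u n) ->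
  u @ \oo --> 0 /\ (fun n => n%:R * u n) @ \oo --> 0.
Proof.
move=> p_gt0 /andP[P_ge0 P_lt1] uP.
have p_ge1 : 1 <= p%:R :> R by rewrite ler1n.
set d := (1 - P) / (2 * p%:R); set s := 1 - d.
have pd : p%:R * d = (1 - P) / 2 by rewrite /d; field; rewrite pnatr_eq0 -lt0n.
have d_gt0 : 0 < d by rewrite /d divr_gt0 ?mulr_gt0 //; lra.
have d_le : d <= 1 / 2 by nra.
have s_gt0 : 0 < s <= 1 by rewrite /s; apply/andP; split; lra.
have Ps : 0 <= P <= s ^+ p.
  have /(bernoulli_ineq p) : -1 <= - d by lra.
  by rewrite P_ge0 mulrN pd /s; apply: le_trans; lra.
have s_lt1 : 0 <= s < 1 by rewrite /s; apply/andP; split; lra.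
have [C u_le] : exists C, forall n, `|u n| <= C * s ^+ n.
  by eexists; exact: periodic_geometric_bound p_gt0 s_gt0 Ps uP.
split.
- apply: (cvg0_norm_le u_le); rewrite -(mulr0 C); apply: cvgMl_tmp.
  by apply: cvg_expr; rewrite ger0_norm; case/andP: s_lt1.
- apply: (@cvg0_norm_le _ (fun n => C * (n%:R * s ^+ n))).
    by move=> n; rewrite normrM normr_nat mulrCA; apply: ler_wpM2l.
  by rewrite -(mulr0 C); apply: cvgMl_tmp; exact: cvg_nat_mul_expr.
Qed.
End PeriodicDecay.

Lemma periodic_modn (T : Type) (f : nat -> T) (p : nat) :
  (forall n, f (n + p)%N = f n) -> forall n, f n = f (n %% p)%N.
Proof.
move=> fP n; rewrite {1}(divn_eq n p) addnC.
by elim: (n %/ p)%N => [|k IH]; rewrite ?mul0n ?addn0 // mulSn addnCA addnC fP.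
Qed.

Section PeriodicHazard.
Variables (R : realType) (p : nat) (q V : nat -> R).
Hypotheses (p_gt0 : (0 < p)%N) (qP : forall n, q (n + p)%N = q n)
  (VP : forall n, V (n + p)%N = V n)
  (V_period : forall n, (n < p)%N -> V n = 1 + (1 - q n) * V n.+1)
  (survival_period : 0 <= \prod_(k < p) (1 - q k) < 1).
Local Open Scope classical_set_scope.

(* [q n] is the success probability of trial [n] given earlier failures, and
   [V n] the expected number of trials counted from trial [n]. *)

Let S n := \prod_(k < n) (1 - q k).

Lemma periodic_first_step n : V n = 1 + (1 - q n) * V n.+1.
Proof.
have V_succ : V (n %% p).+1 = V n.+1.
  by rewrite [RHS](periodic_modn VP) (periodic_modn VP (n %% p).+1) -addn1 modnDml addn1.
by rewrite (periodic_modn VP) (periodic_modn qP) V_period ?ltn_pmod // V_succ.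
Qed.

Lemma prod_hazardS n : S n.+1 = S n * (1 - q n).
Proof. by rewrite /S big_ord_recr. Qed.

Lemma prod_hazardD_period n : S (n + p)%N = S p * S n.
Proof.
elim: n => [|n IH]; first by rewrite add0n /S big_ord0 mulr1.
by rewrite addSn !prod_hazardS IH qP mulrA.
Qed.

Lemma sum_hazard N : \sum_(n < N) S n * q n = 1 - S N.
Proof.
elim: N => [|N IH]; first by rewrite big_ord0 /S big_ord0 subrr.
by rewrite big_ord_recr /= IH prod_hazardS; ring.
Qed.

Lemma sum_time_hazard N :
  \sum_(n < N) n.+1%:R * (S n * q n) = V 0 - (N%:R * S N + S N * V N).
Proof.
elim: N => [|N IH]; first by rewrite big_ord0 /S big_ord0 mul0r mul1r add0r subrr.
by rewrite big_ord_recr /= IH prod_hazardS (periodic_first_step N) -natr1; ring.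
Qed.

Theorem periodic_hazard_moments :
  (fun N => \sum_(n < N) S n * q n) @ \oo --> (1 : R) /\
  (fun N => \sum_(n < N) n.+1%:R * (S n * q n)) @ \oo --> V 0.
Proof.
have [S_cvg0 NS_cvg0] := cvg_periodic_decay p_gt0 survival_period prod_hazardD_period.
have SV_period n : S (n + p)%N * V (n + p)%N = S p * (S n * V n).
  by rewrite prod_hazardD_period VP mulrA.
have [SV_cvg0 _] := cvg_periodic_decay p_gt0 survival_period SV_period.
split.
- rewrite (funext sum_hazard) -[X in _ --> X]subr0.
  by apply: cvgB => //; exact: cvg_cst.
- rewrite (funext sum_time_hazard) -[X in _ --> X]subr0 -[0 in X in _ - X]addr0.
  by apply: cvgB; [exact: cvg_cst | exact: cvgD].
Qed.

End PeriodicHazard.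

Section CaptureTimeAlgebra.
Variable R : realType.
Implicit Types (theta X Y : R).

Definition cross_time X Y : R := (4 * X * Y - 3 * Y - X + 1) / (X + Y - 1).

Definition same_side_time theta X Y : R :=
  2 * (X * Y + theta * X * (Y - 1)) / (X * Y - theta ^+ 2 * (X - 1) * (Y - 1)).

Lemma miss_bounds X : 1 <= X -> 0 <= 1 - X^-1 < 1.
Proof.
move=> X_ge1; have X_gt0 : 0 < X by lra.
by rewrite subr_ge0 invf_le1 // X_ge1 ltrBlDr ltrDl invr_gt0.
Qed.

Lemma scaled_miss_bounds theta X : 0 <= theta <= 1 -> 1 <= X ->
  0 <= theta * (1 - X^-1) < 1.
Proof. by move=> /andP[? ?] /miss_bounds /andP[? ?]; apply/andP; split; nra. Qed.

Lemma cross_time_eq X Y : 1 <= X -> 1 <= Y ->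
  cross_time X Y = 1 + (1 - X^-1) * (1 + cross_time Y X).
Proof.
move=> X_ge1 Y_ge1; have X_neq0 : X != 0 by rewrite gt_eqF //; lra.
have D_neq0 : X + Y - 1 != 0 by rewrite gt_eqF //; lra.
by rewrite /cross_time; field; rewrite X_neq0 (addrC Y) D_neq0.
Qed.

Lemma same_side_time_eq theta X Y : 0 <= theta <= 1 -> 1 <= X -> 1 <= Y ->
  same_side_time theta X Y = 2 + theta * (1 - Y^-1) * same_side_time theta Y X.
Proof.
move=> /andP[theta_ge0 theta_le1] X_ge1 Y_ge1.
have Y_neq0 : Y != 0 by rewrite gt_eqF //; lra.
have D_gt0 : 0 < X * Y - theta ^+ 2 * (X - 1) * (Y - 1).
  have : 0 <= (X - 1) * (Y - 1) by rewrite mulr_ge0 // subr_ge0.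
  have : theta ^+ 2 <= 1 by rewrite expr_le1.
  nra.
rewrite /same_side_time.
have -> : Y * X - theta ^+ 2 * (Y - 1) * (X - 1) = X * Y - theta ^+ 2 * (X - 1) * (Y - 1).
  by ring.
by field; rewrite Y_neq0 gt_eqF.
Qed.

End CaptureTimeAlgebra.

Lemma exchange_big_pairs (R : nmodType) (I J : finType) (F : I -> I -> J -> J -> R) :
  \sum_a \sum_b \sum_c \sum_d F a b c d = \sum_c \sum_d \sum_a \sum_b F a b c d.
Proof.
transitivity (\sum_a \sum_c \sum_b \sum_d F a b c d).
  by apply: eq_bigr => a _; exact: exchange_big.
rewrite exchange_big; apply: eq_bigr => c _.
transitivity (\sum_a \sum_d \sum_b F a b c d).
  by apply: eq_bigr => a _; exact: exchange_big.
exact: exchange_big.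
Qed.

Section Transitions.
Variables (R : realType) (T : finType) (e : rel T) (theta : R).

Lemma sum_uniform (A : {set T}) :
  (0 < #|A|)%N -> \sum_x (if x \in A then #|A|%:R^-1 else 0) = 1 :> R.
Proof.
move=> A_gt0; rewrite -big_mkcond sumr_const -(mulr_natr (#|A|%:R^-1)).
by rewrite mulVf // pnatr_eq0 -lt0n.
Qed.

Lemma sum_uniform_nbr x :
  (0 < deg e x)%N -> \sum_y (if e x y then (deg e x)%:R^-1 else 0) = 1 :> R.
Proof.
move=> deg_gt0; rewrite -[RHS](sum_uniform deg_gt0).
by apply: eq_bigr => y _; rewrite inE.
Qed.

Lemma tr_sum1 :
  (forall x, 0 < deg e x)%N -> (forall c r, c != r -> 0 < #|sp_nbr e c r|)%N ->
  forall n c r, c != r -> \sum_c' \sum_r' tr e theta n c r c' r' = 1.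
Proof.
move=> deg_gt0 sp_nbr_gt0 n c r cr; rewrite /tr; case: odd.
- under eq_bigr do rewrite -big_mkcond big_pred1_eq.
  rewrite big_split /= -!mulr_sumr sum_uniform_nbr // sum_uniform ?sp_nbr_gt0 //.
  by rewrite !mulr1 subrKC.
- rewrite /robber_tr (bigD1 c) //= eqxx [X in _ + X]big1 ?addr0.
    exact: sum_uniform_nbr.
  by move=> c' /negbTE c'c; apply: big1 => r' _; rewrite c'c.
Qed.

Lemma tr_neq0 n c r c' r' : tr e theta n c r c' r' != 0 ->
  if odd n then r' = r /\ e c c' else c' = c /\ e r r'.
Proof.
rewrite /tr; case: odd.
- rewrite /cop_tr; have [->|] := eqVneq r' r; last by rewrite eqxx.
  case: (boolP (e c c')) => [ecc' _ | ncc']; first by [].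
  have /negbTE -> : c' \notin sp_nbr e c r by rewrite !inE (negbTE ncc').
  by rewrite !mulr0 addr0 eqxx.
- rewrite /robber_tr; case: (boolP (_ && _)) => [/andP[/eqP -> rr'] _ | _] //.
  by rewrite eqxx.
Qed.

End Transitions.

Section KilledChain.
Variables (R : realType) (T : finType) (e : rel T) (theta : R).
Variables (K : Type) (kind : T -> T -> K) (step : nat -> K -> K)
  (hazard : nat -> K -> R).
Hypotheses
  (tr_stochastic : forall n c r, c != r -> \sum_c' \sum_r' tr e theta n c r c' r' = 1)
  (tr_kind : forall n c r c' r',
     tr e theta n c r c' r' != 0 -> kind c' r' = step n (kind c r))
  (tr_capture : forall n c r,
     c != r -> \sum_x tr e theta n c r x x = hazard n (kind c r)).
Variables (c0 r0 : T).
Hypothesis c0_neq_r0 : c0 != r0.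

Fixpoint kind_at n := if n is n'.+1 then step n' (kind_at n') else kind c0 r0.
Definition hazard_at n := hazard n (kind_at n).
Definition survival n := \sum_c \sum_r alive e theta c0 r0 n c r.

Lemma alive_support n c r :
  alive e theta c0 r0 n c r != 0 -> c != r /\ kind c r = kind_at n.
Proof.
elim: n c r => [|n IH] c r /=.
  by case: (boolP (_ && _)) => [/andP[/eqP -> /eqP ->] | _]; rewrite ?eqxx.
have [-> | cr] := eqVneq c r; first by rewrite eqxx.
move=> /eqP alive_neq0; split=> //; apply: contra_notP alive_neq0 => kind_neq.
apply: big1 => c1 _; apply: big1 => r1 _.
have [-> | /IH [_ k1]] := eqVneq (alive e theta c0 r0 n c1 r1) 0; first by rewrite mul0r.
have [-> | /tr_kind k] := eqVneq (tr e theta n c1 r1 c r) 0; first by rewrite mulr0.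
by case: kind_neq; rewrite k k1.
Qed.

Lemma capt_hazard n : capt e theta c0 r0 n = survival n * hazard_at n.
Proof.
rewrite /capt /survival mulr_suml; apply: eq_bigr => c _; rewrite mulr_suml.
apply: eq_bigr => r _.
have [-> | /alive_support [cr k]] := eqVneq (alive e theta c0 r0 n c r) 0.
  by rewrite !mul0r.
by rewrite tr_capture // k.
Qed.

Lemma survival0 : survival 0 = 1.
Proof.
rewrite /survival pair_big (eq_bigr (fun p => if p == (c0, r0) then 1 else 0)).
  by rewrite -big_mkcond big_pred1_eq.
by move=> -[c r] _; rewrite xpair_eqE.
Qed.

Lemma survivalS n : survival n.+1 = survival n * (1 - hazard_at n).
Proof.
pose F c' r' := \sum_c \sum_r alive e theta c0 r0 n c r * tr e theta n c r c' r'.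
have alive_next c' : \sum_r' alive e theta c0 r0 n.+1 c' r' = \sum_r' F c' r' - F c' c'.
  rewrite [in RHS](bigD1 c') //= addrC addrK (bigD1 c') //= eqxx add0r.
  by apply: eq_bigr => r' /negbTE; rewrite eq_sym => ->.
have mass_moved : \sum_c' \sum_r' F c' r' = survival n.
  rewrite /F exchange_big_pairs; apply: eq_bigr => c _; apply: eq_bigr => r _.
  have [-> | /alive_support [cr _]] := eqVneq (alive e theta c0 r0 n c r) 0.
    by rewrite !big1 // => *; rewrite big1 // => *; rewrite mul0r.
  rewrite -[RHS]mulr1 -(tr_stochastic n cr) mulr_sumr.
  by apply: eq_bigr => c' _; rewrite mulr_sumr.
have captured : \sum_c' F c' c' = capt e theta c0 r0 n.
  rewrite /F exchange_big; apply: eq_bigr => c _.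
  by rewrite exchange_big; apply: eq_bigr => r _; rewrite mulr_sumr.
by rewrite /survival (eq_bigr _ (fun c' _ => alive_next c')) sumrB mass_moved captured
  capt_hazard mulrBr mulr1.
Qed.

Lemma survivalE n : survival n = \prod_(k < n) (1 - hazard_at k).
Proof.
by elim: n => [|n IH]; rewrite ?survival0 ?big_ord0 // survivalS IH big_ord_recr.
Qed.

Theorem expected_capture_time_periodic (p : nat) (V : nat -> R) :
  (0 < p)%N -> (forall n, hazard_at (n + p)%N = hazard_at n) ->
  (forall n, V (n + p)%N = V n) ->
  (forall n, (n < p)%N -> V n = 1 + (1 - hazard_at n) * V n.+1) ->
  0 <= \prod_(k < p) (1 - hazard_at k) < 1 ->
  expected_capture_time e theta c0 r0 (V 0).
Proof.
move=> p_gt0 hP VP V_period survival_period; rewrite /expected_capture_time.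
have -> : capt e theta c0 r0 = fun n => \prod_(k < n) (1 - hazard_at k) * hazard_at n.
  by apply: funext => n; rewrite capt_hazard survivalE.
exact: periodic_hazard_moments p_gt0 hP VP V_period survival_period.
Qed.

End KilledChain.

Lemma in_ball1 (T : finType) (e : rel T) x y :
  (y \in Defs.ball e 1 x) = (y == x) || e x y.
Proof. by rewrite /= big_set1 !inE. Qed.

Section CompleteBipartite.
Variables (v w : nat).
Hypotheses (v_gt0 : (0 < v)%N) (w_gt0 : (0 < w)%N).
Local Notation T := ('I_v + 'I_w)%type.
Local Notation E := (Kbip v w).

Definition side (x : T) : bool := if x is inl _ then true else false.
Definition part_size (b : bool) : nat := if b then v else w.

Lemma KbipE x y : E x y = (side x != side y).
Proof. by case: x => a; case: y => b. Qed.

Lemma card_side b : #|[set y : T | side y == b]| = part_size b.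
Proof.
case: b.
- have -> : [set y : T | side y == true] = inl @: [set: 'I_v].
    apply/setP => -[a|a]; rewrite !inE /=; first by apply/esym/imset_f; rewrite inE.
    by apply/esym/imsetP => -[].
  by rewrite card_imset ?cardsT ?card_ord //; exact: inl_inj.
- have -> : [set y : T | side y == false] = inr @: [set: 'I_w].
    apply/setP => -[a|a]; rewrite !inE /=; last by apply/esym/imset_f; rewrite inE.
    by apply/esym/imsetP => -[].
  by rewrite card_imset ?cardsT ?card_ord //; exact: inr_inj.
Qed.

Lemma Kbip_deg x : deg E x = part_size (~~ side x).
Proof.
rewrite /deg -card_side; apply: eq_card => y; rewrite !inE KbipE.
by case: (side x); case: (side y).
Qed.

Lemma Kbip_deg_gt0 x : (0 < deg E x)%N.
Proof. by rewrite Kbip_deg; case: (side x). Qed.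

Lemma Kbip_in_ball2 x y : y \in Defs.ball E 2 x.
Proof.
rewrite [Defs.ball E 2 x]/= inE in_ball1; case: (y == x) => //=.
case: (boolP (E x y)) => //= nexy; apply/bigcupP.
exists (if x is inl _ then inr (Ordinal w_gt0) else inl (Ordinal v_gt0)).
  by rewrite in_ball1 KbipE; case: x {nexy}.
by rewrite inE KbipE; move: nexy; rewrite KbipE; case: x => ?; case: y.
Qed.

Lemma Kbip_gdist x y :
  gdist E x y = if y == x then 0%N else if E x y then 1%N else 2%N.
Proof.
rewrite /gdist card_sum !card_ord.
have [-> | nyx] := eqVneq y x.
  by case: (v + w)%N (addn_gt0 v w) v_gt0 => // k; rewrite /= inE eqxx.
have size_ge : (2 + ~~ E x y <= v + w)%N.
  move: nyx; rewrite KbipE; case: x => a; case: y => b /= ba; try lia;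
    have := ltn_ord a; have := ltn_ord b;
    (have : (b : nat) != a by apply: contraNneq ba => /val_inj ->); lia.
set reached := fun n => y \in Defs.ball E n x.
have ball0 : reached 0%N = false by rewrite /reached /= inE (negbTE nyx).
have ball1 : reached 1%N = E x y by rewrite /reached in_ball1 (negbTE nyx).
have ball2 : reached 2%N by exact: Kbip_in_ball2.
move: size_ge; case: (v + w)%N => [|[|[|k]]] //=; rewrite ball0 ball1;
  by case: (E x y); rewrite //= ball2.
Qed.

Lemma Kbip_sp_nbr_adj c r : E c r -> sp_nbr E c r = [set r].
Proof.
move=> cr; have rc : r != c by apply: contraTneq cr => ->; rewrite KbipE eqxx.
apply/setP => y; rewrite !inE !Kbip_gdist (negbTE rc) cr eqSS eq_sym.
rewrite [y == r]eq_sym; case: (eqVneq r y) => [<- | _]; first by rewrite cr.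
by case: (E y r); rewrite andbF.
Qed.

Lemma Kbip_sp_nbr_same c r : c != r -> ~~ E c r -> sp_nbr E c r = nbr E c.
Proof.
move=> cr ncr; apply/setP => y.
rewrite !inE !Kbip_gdist [r == c]eq_sym (negbTE cr) (negbTE ncr).
case: (boolP (E c y)) => //= cy.
have yr : E y r by move: cy ncr; rewrite !KbipE negbK => /negPf cy /eqP <-; rewrite eq_sym cy.
have ry : r != y by apply: contraTneq yr => ->; rewrite KbipE eqxx.
by rewrite (negbTE ry) yr.
Qed.

Lemma Kbip_sp_nbr_gt0 c r : c != r -> (0 < #|sp_nbr E c r|)%N.
Proof.
move=> cr; have [/Kbip_sp_nbr_adj -> | ncr] := boolP (E c r); first by rewrite cards1.
by rewrite Kbip_sp_nbr_same //; exact: Kbip_deg_gt0.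
Qed.

Variables (R : realType) (theta : R).

(* States are summarised by the pair (side of the cop, side of the robber),
   where [true] stands for V. *)
Definition Kbip_step (n : nat) (k : bool * bool) : bool * bool :=
  if odd n then (~~ k.1, k.2) else (k.1, ~~ k.2).

(* The robber moves to a uniform vertex of the cop's part; a cop adjacent to
   the robber misses only when she moves at random to another vertex of the
   robber's part. *)
Definition Kbip_hazard (n : nat) (k : bool * bool) : R :=
  if k.1 == k.2 then 0
  else if odd n then 1 - theta * (1 - (part_size k.2)%:R^-1)
  else (part_size k.1)%:R^-1.

Lemma Kbip_tr_kind n c r c' r' : tr E theta n c r c' r' != 0 ->
  (side c', side r') = Kbip_step n (side c, side r).
Proof.
move/tr_neq0; rewrite /Kbip_step; case: odd => -[-> adj]; move: adj; rewrite KbipE.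
  by case: (side c); case: (side c').
by case: (side r); case: (side r').
Qed.

Lemma Kbip_tr_capture n c r : c != r ->
  \sum_x tr E theta n c r x x = Kbip_hazard n (side c, side r).
Proof.
move=> cr; rewrite /tr /Kbip_hazard /=; case: odd.
- rewrite /cop_tr -big_mkcond big_pred1_eq.
  have [adj | nadj] := boolP (E c r).
    rewrite Kbip_sp_nbr_adj // inE eqxx cards1 invr1 mulr1 Kbip_deg.
    by move: adj; rewrite KbipE; case: (side c); case: (side r) => //= _; ring.
  have /negbTE -> : r \notin sp_nbr E c r by rewrite !inE (negbTE nadj).
  by move: nadj; rewrite KbipE negbK => ->; rewrite !mulr0 addr0.
- rewrite /robber_tr (eq_bigr (fun x =>
    if x == c then (if E r x then (deg E r)%:R^-1 else 0) else 0)).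
    rewrite -big_mkcond big_pred1_eq KbipE Kbip_deg eq_sym.
    by case: (side c); case: (side r).
  by move=> x _; case: (x == c).
Qed.

Local Notation side_kind := (fun c r : T => (side c, side r)).
Local Notation Kbip_hazard_at c0 r0 := (hazard_at side_kind Kbip_step Kbip_hazard c0 r0).

Lemma Kbip_step4 n k :
  Kbip_step n.+3 (Kbip_step n.+2 (Kbip_step n.+1 (Kbip_step n k))) = k.
Proof. by rewrite /Kbip_step /= !negbK; case: odd; case: k => a b /=; rewrite !negbK. Qed.

Lemma Kbip_hazard_period c0 r0 n : Kbip_hazard_at c0 r0 (n + 4)%N = Kbip_hazard_at c0 r0 n.
Proof.
have kind_period :
    kind_at side_kind Kbip_step c0 r0 (n + 4) = kind_at side_kind Kbip_step c0 r0 n.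
  by rewrite !addnS addn0; exact: Kbip_step4.
by rewrite /hazard_at kind_period /Kbip_hazard oddD addbF.
Qed.

Lemma Kbip_expected_capture_time c0 r0 (V0 V1 V2 V3 : R) : c0 != r0 ->
  V0 = 1 + (1 - Kbip_hazard_at c0 r0 0) * V1 ->
  V1 = 1 + (1 - Kbip_hazard_at c0 r0 1) * V2 ->
  V2 = 1 + (1 - Kbip_hazard_at c0 r0 2) * V3 ->
  V3 = 1 + (1 - Kbip_hazard_at c0 r0 3) * V0 ->
  0 <= (1 - Kbip_hazard_at c0 r0 0) * (1 - Kbip_hazard_at c0 r0 1)
       * (1 - Kbip_hazard_at c0 r0 2) * (1 - Kbip_hazard_at c0 r0 3) < 1 ->
  expected_capture_time E theta c0 r0 V0.
Proof.
move=> c0r0 eq0 eq1 eq2 eq3 survival_bounds.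
pose V n := nth 0 [:: V0; V1; V2; V3] (n %% 4).
have tr_stochastic := tr_sum1 theta Kbip_deg_gt0 Kbip_sp_nbr_gt0.
apply: (expected_capture_time_periodic tr_stochastic Kbip_tr_kind Kbip_tr_capture c0r0
  (p := 4) (V := V)) => //.
- exact: Kbip_hazard_period.
- by move=> n; rewrite /V modnDr.
- by case=> [|[|[|[|]]]].
- by rewrite !big_ord_recr big_ord0 /= mul1r.
Qed.

Lemma Kbip_cross_sides c0 r0 : side c0 != side r0 ->
  expected_capture_time E theta c0 r0
    (cross_time (part_size (side c0))%:R (part_size (~~ side c0))%:R).
Proof.
move=> sides; have c0r0 : c0 != r0 by apply: contraNneq sides => ->.
set X := (part_size (side c0))%:R; set Y := (part_size (~~ side c0))%:R.
have [h0 h1 h2 h3] : [/\ Kbip_hazard_at c0 r0 0 = X^-1, Kbip_hazard_at c0 r0 1 = 0,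
    Kbip_hazard_at c0 r0 2 = Y^-1 & Kbip_hazard_at c0 r0 3 = 0].
  rewrite /hazard_at /Kbip_hazard /= /X /Y.
  by move: sides; case: (side c0); case: (side r0).
have [X_ge1 Y_ge1] : 1 <= X /\ 1 <= Y by rewrite !ler1n; case: (side c0).
apply: (Kbip_expected_capture_time (V1 := 1 + cross_time Y X) (V2 := cross_time Y X)
  (V3 := 1 + cross_time X Y) c0r0); rewrite ?h0 ?h1 ?h2 ?h3 ?subr0 ?mul1r ?mulr1 //.
- exact: cross_time_eq.
- exact: cross_time_eq.
have /andP[x_ge0 x_lt1] := miss_bounds X_ge1.
have /andP[y_ge0 y_lt1] := miss_bounds Y_ge1.
by rewrite mulr_ge0 ?mulr_ilt1.
Qed.

Lemma Kbip_same_side c0 r0 : 0 <= theta <= 1 -> c0 != r0 -> side c0 = side r0 ->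
  expected_capture_time E theta c0 r0
    (same_side_time theta (part_size (side c0))%:R (part_size (~~ side c0))%:R).
Proof.
move=> theta01 c0r0 sides.
set X := (part_size (side c0))%:R; set Y := (part_size (~~ side c0))%:R.
have [h0 h1 h2 h3] : [/\ Kbip_hazard_at c0 r0 0 = 0,
    Kbip_hazard_at c0 r0 1 = 1 - theta * (1 - Y^-1), Kbip_hazard_at c0 r0 2 = 0
    & Kbip_hazard_at c0 r0 3 = 1 - theta * (1 - X^-1)].
  by rewrite /hazard_at /Kbip_hazard /= /X /Y -sides; case: (side c0).
have [X_ge1 Y_ge1] : 1 <= X /\ 1 <= Y by rewrite !ler1n; case: (side c0).
apply: (Kbip_expected_capture_time (V1 := same_side_time theta X Y - 1)
  (V2 := same_side_time theta Y X) (V3 := same_side_time theta Y X - 1) c0r0);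
  rewrite ?h0 ?h1 ?h2 ?h3 ?subr0 ?mul1r ?mulr1 ?subKr.
- by rewrite subrKC.
- by rewrite same_side_time_eq //; ring.
- by rewrite subrKC.
- by rewrite [in LHS]same_side_time_eq //; ring.
- have /andP[x_ge0 x_lt1] := scaled_miss_bounds theta01 X_ge1.
  have /andP[y_ge0 y_lt1] := scaled_miss_bounds theta01 Y_ge1.
  by rewrite (mulr_ge0 y_ge0 x_ge0) (mulr_ilt1 y_ge0 x_ge0 y_lt1 x_lt1).
Qed.

End CompleteBipartite.

Theorem mainTheorem5 (R : realType) (v w : nat) (theta : R) :
  (0 < v)%N -> (0 < w)%N -> 0 <= theta <= 1 ->
  let vr := (v%:R : R) in let wr := (w%:R : R) in
  (* Position 1: cop in V, robber in W *)
  (forall (i : 'I_v) (j : 'I_w),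
     expected_capture_time (Kbip v w) theta (inl i) (inr j)
       ((4 * vr * wr - 3 * wr - vr + 1) / (vr + wr - 1))) /\
  (* Position 2: cop and robber at distinct vertices of V *)
  (forall (i1 i2 : 'I_v), i1 != i2 ->
     expected_capture_time (Kbip v w) theta (inl i1) (inl i2)
       (2 * (vr * wr + theta * vr * (wr - 1))
          / (vr * wr - theta ^+ 2 * (vr - 1) * (wr - 1)))) /\
  (* Position 3: robber in V, cop in W *)
  (forall (i : 'I_v) (j : 'I_w),
     expected_capture_time (Kbip v w) theta (inr j) (inl i)
       ((4 * vr * wr - 3 * vr - wr + 1) / (vr + wr - 1))) /\
  (* Position 4: cop and robber at distinct vertices of W *)
  (forall (j1 j2 : 'I_w), j1 != j2 ->
     expected_capture_time (Kbip v w) theta (inr j1) (inr j2)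
       (2 * (vr * wr + theta * wr * (vr - 1))
          / (vr * wr - theta ^+ 2 * (vr - 1) * (wr - 1)))).
Proof.
move=> v_gt0 w_gt0 theta01 vr wr.
have cross := Kbip_cross_sides v_gt0 w_gt0 theta.
have same := Kbip_same_side v_gt0 w_gt0 theta01.
split; [|split; [|split]].
- by move=> i j; exact: (cross (inl i) (inr j)).
- by move=> i1 i2 i12; apply: same => //; apply: contraNneq i12 => -[].
- move=> i j; have -> : (4 * vr * wr - 3 * vr - wr + 1) / (vr + wr - 1) = cross_time wr vr.
    by rewrite /cross_time; congr (_ / _); ring.
  exact: (cross (inr j) (inl i)).
- move=> j1 j2 j12; have -> : 2 * (vr * wr + theta * wr * (vr - 1))
      / (vr * wr - theta ^+ 2 * (vr - 1) * (wr - 1)) = same_side_time theta wr vr.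
    by rewrite /same_side_time; congr (_ / _); ring.
  by apply: same => //; apply: contraNneq j12 => -[].
Qed.
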